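(* Let $n\ge 1$ and let $\mathcal{C}_2\subseteq\mathbb{F}_2^n$ be a binary linear code. Let $\tilde{\mathcal{C}}_3=\{x\in\mathbb{F}_2^n:\sum_{i=1}^n x_i\equiv 0 \pmod 2\}$ and $\overline{\mathcal{C}}_3=\{y\in\mathbb{F}_2^n:\sum_{i=1}^n y_i\equiv 1 \pmod 2\}$, and define the code $\mathcal{C}\subseteq\mathbb{F}_2^{3n}$ by $$\mathcal{C}=\{(0,\dots,0,\,a,\,x): a\in\mathcal{C}_2,\ x\in\tilde{\mathcal{C}}_3\}\ \cup\ \{(1,\dots,1,\,a,\,y): a\in\mathcal{C}_2,\ y\in\overline{\mathcal{C}}_3\},$$ where each codeword is written as $(c_1,c_2,c_3)$ with $c_1,c_2,c_3\in\mathbb{F}_2^n$ (so the first block $c_1$ lies in the repetition code $\{(0,\dots,0),(1,\dots,1)\}$). Define $$\Gamma_{C^\star}=\{c_1+2c_2+4c_3+8z:\ (c_1,c_2,c_3)\in\mathcal{C},\ z\in\mathbb{Z}^n\}\subseteq\mathbb{R}^n,$$ where vectors of $\mathbb{F}_2^n$ are identified with vectors in $\{0,1\}^n\subseteq\mathbb{R}^n$ and the operations are real addition and scalar multiplication. Then $\Gamma_{C^\star}$ is a lattice if and only if $\mathcal{C}_2$ is self-orthogonal and contains the all-ones vector $(1,\dots,1)$.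
   Context: A lattice in $\mathbb{R}^n$ is the set of all integer linear combinations of a set of linearly independent vectors of $\mathbb{R}^n$. For $c,\tilde c\in\mathbb{F}_2^n$, $\langle c,\tilde c\rangle=\sum_{i=1}^n c_i\tilde c_i \bmod 2$, and $\mathcal{C}^\perp=\{c\in\mathbb{F}_2^n:\langle c,\tilde c\rangle=0 \text{ for all }\tilde c\in\mathcal{C}\}$. A binary code $\mathcal{C}$ is self-orthogonal if $\mathcal{C}\subseteq\mathcal{C}^\perp$. (Here $\mathcal{C}_2$ being linear is equivalent to the code $\mathcal{C}$ above being linear.) *)

From HB Require Import structures.
From mathcomp Require Import all_boot all_order all_algebra.
From mathcomp Require Import reals.
Unset Printing Implicit Defensive.
Import Order.TTheory GRing.Theory Num.Theory.
Local Open Scope ring_scope.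

Definition f2dot {n : nat} (c c' : 'rV['F_2]_n) : 'F_2 :=
  \sum_(i < n) c 0 i * c' 0 i.

Definition dual_code {n : nat} (C : {set 'rV['F_2]_n}) : {set 'rV['F_2]_n} :=
  [set c | [forall c' in C, f2dot c c' == 0]].

Definition self_orthogonal {n : nat} (C : {set 'rV['F_2]_n}) : Prop :=
  C \subset dual_code C.

(* A binary linear code: an F_2-subspace (over F_2: contains 0, closed under +). *)
Definition linear_code {n : nat} (C : {set 'rV['F_2]_n}) : Prop :=
  (0 : 'rV['F_2]_n) \in C /\ (forall a b, a \in C -> b \in C -> a + b \in C).

Definition ones (n : nat) : 'rV['F_2]_n := const_mx 1.

Definition parity {n : nat} (x : 'rV['F_2]_n) : 'F_2 := \sum_(i < n) x 0 i.

Definition C3tilde (n : nat) : {set 'rV['F_2]_n} := [set x | parity x == 0].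
Definition C3bar (n : nat) : {set 'rV['F_2]_n} := [set y | parity y == 1].

Definition Ccode {n : nat} (C2 : {set 'rV['F_2]_n})
  (c1 c2 c3 : 'rV['F_2]_n) : Prop :=
  (c1 = 0 /\ c2 \in C2 /\ c3 \in C3tilde n) \/
  (c1 = ones n /\ c2 \in C2 /\ c3 \in C3bar n).

Definition f2R (R : realType) (b : 'F_2) : R := (nat_of_ord b)%:R.
Definition vecR (R : realType) {n : nat} (c : 'rV['F_2]_n) : 'rV[R]_n :=
  map_mx (f2R R) c.

Definition GammaCstar (R : realType) {n : nat} (C2 : {set 'rV['F_2]_n})
  (v : 'rV[R]_n) : Prop :=
  exists (c1 c2 c3 : 'rV['F_2]_n) (z : 'rV[int]_n),
    Ccode C2 c1 c2 c3 /\
    v = vecR R c1 + 2 *: vecR R c2 + 4 *: vecR R c3 + 8 *: map_mx intr z.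

Definition is_lattice {R : realType} {n : nat} (S : 'rV[R]_n -> Prop) : Prop :=
  exists (k : nat) (B : 'M[R]_(k, n)),
    row_free B /\
    (forall v, S v <-> exists z : 'rV[int]_k, v = map_mx intr z *m B).

From HB Require Import structures.
From mathcomp Require Import all_boot all_order all_algebra.
From mathcomp Require Import reals.
From mathcomp Require Import zify.
Import Order.TTheory GRing.Theory Num.Theory.
Local Open Scope ring_scope.

(* Writing [s] for the constant value of the first block, [Gamma_{C*}] is the
   set of integer vectors [s 1 + 2 b + 4 c + 8 z] with [b] in [C2] and
   [parity c = s].  It contains [8 Z^n] and is finitely generated modulo
   [8 Z^n], so it is a lattice exactly when it is closed under addition
   (Smith normal form then yields a basis).  Adding two such vectors with binary
   carries gives the blocks [s + s'], [b + b' + w] and [c + c' + maj (b, b', w)]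
   with [w = (s s') 1]; the last one has parity
   [s + s' + <b, b'> + <b', w> + <w, b>].  So closure holds when [1] is in
   [C2] (then [w] is a codeword) and [C2] is self-orthogonal.  Conversely,
   doubling [(1, 0, e)] with [e] of odd weight puts [1] in the second block,
   and adding [(0, a, 0)] and [(0, b, 0)] gives the third block [a * b], whose
   parity [<a, b>] must then vanish. *)

Lemma lattice_addr_closed (R : realType) n (S : 'rV[R]_n -> Prop) u v :
  is_lattice S -> S u -> S v -> S (u + v).
Proof.
case=> k [B [_ HB]] /HB [y ->] /HB [y' ->].
by apply/HB; exists (y + y'); rewrite map_mxD mulmxDl.
Qed.

Lemma is_lattice_int_basis (R : realType) n (S : 'rV[R]_n -> Prop)
    (B : 'M[int]_n) :
  \det B != 0 ->
  (forall v, S v <-> exists y : 'rV[int]_n, v = map_mx intr (y *m B)) ->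
  is_lattice S.
Proof.
move=> detB HS; exists n, (map_mx intr B); split.
  by rewrite row_free_unit unitmxE det_map_mx unitfE intr_eq0.
by move=> v; rewrite HS; split=> -[y ->]; exists y; rewrite map_mxM.
Qed.

Lemma scalar_col_span_square_basis n k (c : int) (G : 'M[int]_(k, n)) :
  c != 0 ->
  exists B : 'M[int]_n, \det B != 0 /\
    forall u : 'rV_n,
      (exists y : 'rV_(n + k), u = y *m col_mx c%:M G) <-> exists y, u = y *m B.
Proof.
move=> c_neq0.
(* As [n <= n + k], the Smith normal form of the generators is [col_mx D' 0]. *)
have [L uL [Rm _ [d _ defG]]] := int_Smith_normal_form (col_mx c%:M G).
set D := \matrix_(i, j) _ in defG.
pose D' : 'M[int]_n := \matrix_(i, j) (d`_i *+ (i == j :> nat)).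
have defD : D = col_mx D' 0.
  apply/matrixP => i j; rewrite !mxE; case: splitP => i' ->; rewrite !mxE //.
  by rewrite gtn_eqF ?mulr0n // ltn_addr.
have mulD k' (Y : 'M_(k', n + k)) : Y *m D = lsubmx Y *m D'.
  by rewrite defD -{1}[Y]hsubmxK mul_row_col mulmx0 addr0.
exists (D' *m Rm); split.
  have : row_mx 1%:M 0 *m col_mx c%:M G = c%:M.
    by rewrite mul_row_col mul1mx mul0mx addr0.
  rewrite defG !mulmxA mulD -mulmxA => /(congr1 determinant).
  rewrite det_mulmx det_scalar => detc; apply: contraNneq c_neq0 => det0.
  by move: detc; rewrite det0 mulr0 => /esym/eqP; rewrite expf_eq0 => /andP[].
move=> u; split=> -[y ->].
  by exists (lsubmx (y *m L)); rewrite defG !mulmxA mulD.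
exists (row_mx y 0 *m invmx L).
by rewrite defG !mulmxA -(mulmxA _ (invmx L)) mulVmx // mulmx1 mulD row_mxKl.
Qed.

Definition gen_mx {n} {X : finType} (gen : X -> 'rV[int]_n) :
  'M[int]_(#|X|, n) :=
  \matrix_i gen (enum_val i).

Section ModularSpan.

Context {n m : nat} {X : finType}.
Context {L : 'rV[int]_n -> Prop} {gen : X -> 'rV[int]_n}.
Hypothesis m_gt0 : (0 < m)%N.
Hypothesis L_add : forall u v, L u -> L v -> L (u + v).
Hypothesis L_modulus : forall z, L (m%:R *: z).
Hypothesis L_gen : forall x, L (gen x).
Hypothesis L_reduce : forall u, L u -> exists x z, u = gen x + m%:R *: z.

Lemma modular_set_muln_closed u k : L u -> L (u *+ k).
Proof.
move=> Lu; elim: k => [|k IHk]; last by rewrite mulrS; apply: L_add.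
by rewrite mulr0n -(scaler0 _ m%:R).
Qed.

Lemma modular_set_scaler_closed (k : int) u : L u -> L (k *: u).
Proof.
(* [- v = (m - 1) v + m (- v)], and [L] contains [m Z^n]. *)
have oppL v : L v -> L (- v).
  move=> Lv; have -> : - v = v *+ m.-1 + m%:R *: - v.
    by rewrite scaler_nat -{2}(prednK m_gt0) mulrSr mulNrn addrA addrN add0r.
  by apply: L_add; [apply: modular_set_muln_closed | apply: L_modulus].
move=> Lu; case: k => k.
  by rewrite -natz scaler_nat; apply: modular_set_muln_closed.
by rewrite NegzE scaleNr -natz scaler_nat; apply/oppL/modular_set_muln_closed.
Qed.

Lemma modular_set_span u :
  L u <-> exists y : 'rV_(n + #|X|), u = y *m col_mx (m%:R)%:M (gen_mx gen).
Proof.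
split.
  case/L_reduce=> x [z ->]; exists (row_mx z (delta_mx 0 (enum_rank x))).
  by rewrite mul_row_col mul_mx_scalar -rowE rowK enum_rankK addrC.
case=> y ->; rewrite -[y]hsubmxK mul_row_col mul_mx_scalar mulmx_sum_row.
apply: L_add => //; elim/big_ind: _ => [||i _]; last first.
- by apply: modular_set_scaler_closed; rewrite rowK.
- exact: L_add.
by rewrite -(scaler0 _ m%:R).
Qed.

End ModularSpan.

Definition f2Z (b : 'F_2) : int := (b : nat)%:Z.

Definition vecZ {n} (c : 'rV['F_2]_n) : 'rV[int]_n := map_mx f2Z c.

Definition carry (x y w : 'F_2) : 'F_2 := x * y + y * w + w * x.

Definition carry_row {n} (x y w : 'rV['F_2]_n) : 'rV['F_2]_n :=
  \row_j carry (x 0 j) (y 0 j) (w 0 j).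

Definition bits3 {n} (a b c : 'rV['F_2]_n) (z : 'rV[int]_n) : 'rV[int]_n :=
  vecZ a + 2 *: vecZ b + 4 *: vecZ c + 8 *: z.

Lemma F2_cases (x : 'F_2) : x = 0 \/ x = 1.
Proof. by case: x => [[|[|//]]] ?; [left | right]; apply: val_inj. Qed.

Lemma f2Z_full_adder x y w :
  f2Z x + f2Z y + f2Z w = f2Z (x + y + w) + 2 * f2Z (carry x y w).
Proof.
by case: (F2_cases x) => ->; case: (F2_cases y) => ->; case: (F2_cases w) => ->.
Qed.

Lemma f2Z_half_adder x y : f2Z x + f2Z y = f2Z (x + y) + 2 * f2Z (x * y).
Proof. by case: (F2_cases x) => ->; case: (F2_cases y) => ->. Qed.

Lemma f2Z_bounds x : 0 <= f2Z x <= 1.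
Proof. by case: (F2_cases x) => ->. Qed.

Lemma f2Z_inj : injective f2Z.
Proof. by move=> x y [] /val_inj. Qed.

Lemma bits3_inj n (a b c a' b' c' : 'rV['F_2]_n) z z' :
  bits3 a b c z = bits3 a' b' c' z' -> [/\ a = a', b = b' & c = c'].
Proof.
move/matrixP=> E.
have digits j : [/\ a 0 j = a' 0 j, b 0 j = b' 0 j & c 0 j = c' 0 j].
  move: (E 0 j); rewrite !mxE => {}E.
  move: (f2Z_bounds (a 0 j)) (f2Z_bounds (b 0 j)) (f2Z_bounds (c 0 j)).
  move: (f2Z_bounds (a' 0 j)) (f2Z_bounds (b' 0 j)) (f2Z_bounds (c' 0 j)).
  by move=> *; split; apply: f2Z_inj; lia.
by split; apply/rowP => j; case: (digits j).
Qed.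

Lemma f2Z_bits3_add (a b c a' b' c' : 'F_2) (z z' : int) :
  f2Z a + 2 * f2Z b + 4 * f2Z c + 8 * z
    + (f2Z a' + 2 * f2Z b' + 4 * f2Z c' + 8 * z') =
  f2Z (a + a') + 2 * f2Z (b + b' + a * a')
    + 4 * f2Z (c + c' + carry b b' (a * a'))
    + 8 * (z + z' + f2Z (carry c c' (carry b b' (a * a')))).
Proof.
have := f2Z_half_adder a a'.
have := f2Z_full_adder b b' (a * a').
have := f2Z_full_adder c c' (carry b b' (a * a')).
lia.
Qed.

Lemma bits3_add n (a b c a' b' c' : 'rV['F_2]_n) z z' :
  bits3 a b c z + bits3 a' b' c' z' =
  bits3 (a + a') (b + b' + map2_mx *%R a a')
    (c + c' + carry_row b b' (map2_mx *%R a a'))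
    (z + z' + vecZ (carry_row c c' (carry_row b b' (map2_mx *%R a a')))).
Proof. by apply/rowP => j; rewrite !mxE; apply: f2Z_bits3_add. Qed.

Lemma parityD n (x y : 'rV['F_2]_n) : parity (x + y) = parity x + parity y.
Proof. by rewrite /parity -big_split; apply: eq_bigr => j _; rewrite mxE. Qed.

Lemma parity0 n : parity (0 : 'rV['F_2]_n) = 0.
Proof. by rewrite /parity big1 // => j _; rewrite mxE. Qed.

Lemma f2dot0l n (x : 'rV['F_2]_n) : f2dot 0 x = 0.
Proof. by rewrite /f2dot big1 // => j _; rewrite mxE mul0r. Qed.

Lemma f2dot0r n (x : 'rV['F_2]_n) : f2dot x 0 = 0.
Proof. by rewrite /f2dot big1 // => j _; rewrite mxE mulr0. Qed.

Lemma parity_carry_row n (x y w : 'rV['F_2]_n) :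
  parity (carry_row x y w) = f2dot x y + f2dot y w + f2dot w x.
Proof.
by rewrite /parity /f2dot -!big_split; apply: eq_bigr => j _; rewrite mxE.
Qed.

Lemma self_orthogonalP n (C : {set 'rV['F_2]_n}) :
  self_orthogonal C <-> {in C &, forall a b, f2dot a b = 0}.
Proof.
split=> [/subsetP soC a b Ca Cb | orthC].
  by move/soC: Ca; rewrite inE => /forall_inP/(_ b Cb)/eqP.
by apply/subsetP => a Ca; rewrite inE; apply/forall_inP => b Cb; rewrite orthC.
Qed.

Definition gamma_int {n} (C2 : {set 'rV['F_2]_n}) (u : 'rV[int]_n) : Prop :=
  exists s b c z, b \in C2 /\ parity c = s /\ u = bits3 (const_mx s) b c z.

Lemma CcodeE n (C2 : {set 'rV['F_2]_n}) c1 c2 c3 :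
  Ccode C2 c1 c2 c3 <->
  exists s, [/\ c1 = const_mx s, c2 \in C2 & parity c3 = s].
Proof.
rewrite /Ccode /C3tilde /C3bar !inE; split.
  by case=> -[-> [C2c2 /eqP c3s]]; [exists 0 | exists 1].
by case=> s [-> C2c2 <-]; case: (F2_cases (parity c3)) => ->; [left | right].
Qed.

Lemma map_mx_bits3 (R : realType) n (a b c : 'rV['F_2]_n) z :
  map_mx intr (bits3 a b c z) =
  vecR R a + 2 *: vecR R b + 4 *: vecR R c + 8 *: map_mx intr z.
Proof.
by apply/rowP => j; rewrite !mxE /f2R /f2Z !rmorphD !rmorphM /= !rmorph_nat.
Qed.

Lemma GammaCstarE (R : realType) n (C2 : {set 'rV['F_2]_n}) v :
  GammaCstar R C2 v <-> exists u, v = map_mx intr u /\ gamma_int C2 u.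
Proof.
split.
  case=> c1 [c2 [c3 [z [/CcodeE [s [-> C2c2 c3s]] ->]]]].
  exists (bits3 (const_mx s) c2 c3 z); rewrite map_mx_bits3.
  by split => //; exists s, c2, c3, z.
case=> _ [-> [s [c2 [c3 [z [C2c2 [c3s ->]]]]]]].
exists (const_mx s), c2, c3, z; rewrite map_mx_bits3; split => //.
by apply/CcodeE; exists s.
Qed.

Section Sufficiency.

Context {n : nat} {C2 : {set 'rV['F_2]_n}}.
Hypothesis C2_linear : linear_code C2.
Hypothesis C2_self_orthogonal : self_orthogonal C2.
Hypothesis C2_ones : ones n \in C2.

Lemma const_mx_in_code t : const_mx t \in C2.
Proof. by case: (F2_cases t) => ->; last exact: C2_ones; case: C2_linear. Qed.

Lemma gamma_int_add u v :
  gamma_int C2 u -> gamma_int C2 v -> gamma_int C2 (u + v).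
Proof.
case=> s [b [c [z [C2b [cs ->]]]]] [s' [b' [c' [z' [C2b' [cs' ->]]]]]].
have [_ C2D] := C2_linear.
have /self_orthogonalP orth := C2_self_orthogonal.
rewrite bits3_add map2_const_mx; set w := const_mx (s * s').
have C2w : w \in C2 by apply: const_mx_in_code.
have -> : const_mx s + const_mx s' = const_mx (s + s') :> 'rV_n.
  by apply/rowP => j; rewrite !mxE.
exists (s + s'); do 3!eexists; split; [|split; [|reflexivity]].
  exact: C2D (C2D _ _ C2b C2b') C2w.
by rewrite !parityD parity_carry_row !orth ?cs ?cs' ?addr0.
Qed.

Lemma gamma_int_modulus z : gamma_int C2 (8 *: z).
Proof.
have [C20 _] := C2_linear.
exists 0, 0, 0, z; split => //; split; first exact: parity0.
by apply/rowP => j; rewrite !mxE /f2Z /= !mulr0 !add0r.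
Qed.

Definition gamma_gen (x : 'F_2 * 'rV['F_2]_n * 'rV['F_2]_n) : 'rV[int]_n :=
  let: (s, b, c) := x in
  if (b \in C2) && (parity c == s) then bits3 (const_mx s) b c 0 else 0.

Lemma gamma_int_basis : exists B : 'M[int]_n, \det B != 0 /\
  forall u, gamma_int C2 u <-> exists y, u = y *m B.
Proof.
have [//|B [detB spanB]] :=
  @scalar_col_span_square_basis n _ 8 (gen_mx gamma_gen).
exists B; split => // u; rewrite -spanB; apply: modular_set_span => //.
- exact: gamma_int_add.
- exact: gamma_int_modulus.
- case=> [[s b] c] /=; case: ifP => [/andP [C2b /eqP cs] | _].
    by exists s, b, c, 0.
  by rewrite -(scaler0 _ 8); apply: gamma_int_modulus.
- move=> _ [s [b [c [z [C2b [cs ->]]]]]]; exists (s, b, c), z.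
  by rewrite /= C2b cs eqxx /bits3 scaler0 addr0.
Qed.

End Sufficiency.

Section Necessity.

Context {n : nat} {C2 : {set 'rV['F_2]_n}}.
Hypothesis n_gt0 : (0 < n)%N.
Hypothesis C2_0 : 0 \in C2.
Hypothesis gamma_addr_closed :
  forall u v, gamma_int C2 u -> gamma_int C2 v -> gamma_int C2 (u + v).

Let j0 : 'I_n := Ordinal n_gt0.

Lemma ones_in_code : ones n \in C2.
Proof.
pose e : 'rV['F_2]_n := delta_mx 0 j0.
have pe : parity e = 1.
  rewrite /parity (bigD1 j0) //= big1 ?mxE ?eqxx ?addr0 // => j /negbTE j_neq.
  by rewrite mxE j_neq andbF.
have g1 : gamma_int C2 (bits3 (const_mx 1) 0 e 0) by exists 1, 0, e, 0.
have [s [b [c [z [C2b [_]]]]]] := gamma_addr_closed _ _ g1 g1.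
rewrite bits3_add map2_const_mx => /bits3_inj [_ eb _].
by rewrite -eb !add0r mulr1 in C2b.
Qed.

Lemma code_self_orthogonal : self_orthogonal C2.
Proof.
apply/self_orthogonalP => a b C2a C2b.
have ga : gamma_int C2 (bits3 (const_mx 0) a 0 0).
  by exists 0, a, 0, 0; rewrite parity0.
have gb : gamma_int C2 (bits3 (const_mx 0) b 0 0).
  by exists 0, b, 0, 0; rewrite parity0.
have [s [b' [c [z [_ [cs]]]]]] := gamma_addr_closed _ _ ga gb.
rewrite bits3_add map2_const_mx mulr0 => /bits3_inj [es _ ec].
have s0 : s = 0 by move/rowP: es => /(_ j0); rewrite !mxE addr0.
by rewrite -s0 -cs -ec !add0r parity_carry_row f2dot0l f2dot0r !addr0.
Qed.

End Necessity.

Lemma map_mx_injective {T U : Type} {m n} {f : T -> U} :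
  injective f -> injective (map_mx f : 'M_(m, n) -> 'M_(m, n)).
Proof.
move=> f_inj A B /matrixP eqAB; apply/matrixP => i j.
by apply: f_inj; move: (eqAB i j); rewrite !mxE.
Qed.

Theorem theorem2 (R : realType) (n : nat) (hn : (1 <= n)%N)
  (C2 : {set 'rV['F_2]_n}) (hC2 : linear_code C2) :
  is_lattice (GammaCstar R C2) <-> (self_orthogonal C2 /\ ones n \in C2).
Proof.
have [C20 _] := hC2.
split=> [lat | [soC2 onesC2]].
  have gamma_add u v : gamma_int C2 u -> gamma_int C2 v -> gamma_int C2 (u + v).
    move=> gu gv; have : GammaCstar R C2 (map_mx intr (u + v)).
      rewrite map_mxD; apply: lattice_addr_closed lat _ _.
        by apply/GammaCstarE; exists u.
      by apply/GammaCstarE; exists v.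
    by case/GammaCstarE=> w [/(map_mx_injective (@intr_inj R)) ->].
  split; first exact: code_self_orthogonal hn gamma_add.
  exact: ones_in_code hn C20 gamma_add.
have [B [detB spanB]] := gamma_int_basis hC2 soC2 onesC2.
apply: (@is_lattice_int_basis R n _ B detB) => v; rewrite GammaCstarE.
split=> [[u [-> /spanB [y ->]]] | [y ->]]; first by exists y.
by exists (y *m B); split => //; apply/spanB; exists y.
Qed.
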